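(* Let $Q$ be an admissible orientation of $\tilde A_n$ with exactly one source $x$ and one sink $y$, and let $\omega,\upsilon$ be the two different maximal paths of $Q$ (both from $x$ to $y$). Let $a\in\Bbbk\setminus\{0\}$. Then for every indecomposable two-sided ideal $I$ of $\Bbbk Q$, \[(\omega+a\upsilon)\cdot I\cong\begin{cases}(\omega+a\upsilon),&\varepsilon_x\in I,\\0,&\text{otherwise},\end{cases}\qquad I\cdot(\omega+a\upsilon)\cong\begin{cases}(\omega+a\upsilon),&\varepsilon_y\in I,\\0,&\text{otherwise}.\end{cases}\] In particular, $(\omega+a\upsilon)\cdot(\omega+b\upsilon)=0$ for every $b\in\Bbbk\setminus\{0\}$.
   Context: $\Bbbk$ is an algebraically closed field. An admissible orientation of $\tilde A_n$ is a finite quiver with $n$ vertices whose underlying undirected graph is a cycle, having no oriented cycle and at least one source. Paths include trivial paths $\varepsilon_z$; products of paths are concatenations when defined and $0$ otherwise. Maximal paths are paths not properly contained as subpaths of other paths. $(\omega+a\upsilon)$ denotes the ideal $\Bbbk(\omega+a\upsilon)$ generated by $\omega+a\upsilon$. An ideal is indecomposable if non-zero and not a direct sum of two non-zero ideals. *)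

From HB Require Import structures.
From mathcomp Require Import all_boot all_order all_algebra.
Set Implicit Arguments. Unset Strict Implicit. Unset Printing Implicit Defensive.
Import GRing.Theory.
Local Open Scope ring_scope.

(* A finite quiver is given by a vertex finType V, an arrow finType E and
   source / target maps s t : E -> V.
   A path is a pair (v, [:: e1; ...; em]) : V * seq E : it starts at v and
   traverses e1, then e2, ..., then em. *)
Definition qpath (V E : finType) := (V * seq E)%type.

Definition is_path (V E : finType) (s t : E -> V) (p : qpath V E) : bool :=
  match p.2 with
  | [::] => true
  | e :: es => (s e == p.1) && path (fun e1 e2 => t e1 == s e2) e es
  end.

Definition ptgt (V E : finType) (t : E -> V) (p : qpath V E) : V :=
  last p.1 (map t p.2).

Definition eps (V E : finType) (z : V) : qpath V E := (z, [::]).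

Definition subpath (V E : finType) (s t : E -> V) (q p : qpath V E) : Prop :=
  exists p1 p2 : qpath V E,
    [/\ is_path s t p1, is_path s t p2, is_path s t q &
        [/\ ptgt t p1 = q.1, ptgt t q = p2.1 & p = (p1.1, p1.2 ++ q.2 ++ p2.2)]].

Definition maximal_path (V E : finType) (s t : E -> V) (p : qpath V E) : Prop :=
  is_path s t p /\ forall q, is_path s t q -> subpath s t p q -> q = p.

Definition is_source (V E : finType) (t : E -> V) (x : V) : Prop :=
  forall e, t e <> x.
Definition is_sink (V E : finType) (s : E -> V) (y : V) : Prop :=
  forall e, s e <> y.

Definition underlying_cycle (n : nat) (V E : finType) (s t : E -> V) : Prop :=
  exists (f : 'I_n -> V) (g : 'I_n -> E),
    [/\ bijective f, bijective g &
        forall i, (s (g i) = f i /\ t (g i) = f (ordS i))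
               \/ (s (g i) = f (ordS i) /\ t (g i) = f i)].

Definition no_oriented_cycle (V E : finType) (s t : E -> V) : Prop :=
  forall p : qpath V E, is_path s t p -> (0 < size p.2)%N -> ptgt t p <> p.1.

Definition admissible_An (n : nat) (V E : finType) (s t : E -> V) : Prop :=
  [/\ underlying_cycle n s t, no_oriented_cycle s t & exists x, is_source t x].

(* Elements of the path algebra kQ: k-valued functions on (candidate) paths,
   finitely supported on genuine paths (coefficient of each path). *)
Definition KQ (k : fieldType) (V E : finType) := qpath V E -> k.

Definition in_kQ (k : fieldType) (V E : finType) (s t : E -> V) (f : KQ k V E) : Prop :=
  (forall p, f p != 0 -> is_path s t p) /\
  exists l : seq (qpath V E), forall p, f p != 0 -> p \in l.

Definition delta (k : fieldType) (V E : finType) (p : qpath V E) : KQ k V E :=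
  fun q => if q == p then 1 else 0.

(* multiplication: (f * g) (p) = sum over factorizations p = p2 . p1
   (p1 traversed first) of f p2 * g p1. *)
Definition kQmul (k : fieldType) (V E : finType) (t : E -> V) (f g : KQ k V E)
  : KQ k V E :=
  fun p => \sum_(i < (size p.2).+1)
             f (ptgt t (p.1, take i p.2), drop i p.2) * g (p.1, take i p.2).

Definition is_ideal (k : fieldType) (V E : finType) (s t : E -> V)
  (I : KQ k V E -> Prop) : Prop :=
  [/\ forall f, I f -> in_kQ s t f,
      I (fun _ => 0),
      forall f g, I f -> I g -> I (fun p => f p + g p),
      forall c f, I f -> I (fun p => c * f p) &
      forall f g, in_kQ s t f -> I g -> I (kQmul t f g) /\ I (kQmul t g f)].

Definition nonzero_ideal (k : fieldType) (V E : finType) (I : KQ k V E -> Prop) : Prop :=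
  exists f, I f /\ exists p, f p != 0.

Definition zero_ideal (k : fieldType) (V E : finType) : KQ k V E -> Prop :=
  fun f => f = (fun _ => 0).

Definition indecomposable_ideal (k : fieldType) (V E : finType) (s t : E -> V)
  (I : KQ k V E -> Prop) : Prop :=
  is_ideal s t I /\ nonzero_ideal I /\
  ~ exists J K : KQ k V E -> Prop,
      [/\ is_ideal s t J, is_ideal s t K, nonzero_ideal J, nonzero_ideal K &
        [/\ (forall f, J f -> K f -> f = (fun _ => 0)) &
          forall f, I f <-> exists g h, [/\ J g, K h & f = (fun p => g p + h p)]]].

Definition ideal_prod (k : fieldType) (V E : finType) (t : E -> V)
  (J I : KQ k V E -> Prop) : KQ k V E -> Prop :=
  fun f => exists m (F G : 'I_m -> KQ k V E),
    (forall i, J (F i) /\ I (G i)) /\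
    f = (fun p => \sum_(i < m) kQmul t (F i) (G i) p).

Definition gen_ideal (k : fieldType) (V E : finType) (s t : E -> V)
  (u : KQ k V E) : KQ k V E -> Prop :=
  fun f => exists m (F G : 'I_m -> KQ k V E),
    (forall i, in_kQ s t (F i) /\ in_kQ s t (G i)) /\
    f = (fun p => \sum_(i < m) kQmul t (kQmul t (F i) u) (G i) p).

Definition same_ideal (k : fieldType) (V E : finType) (I J : KQ k V E -> Prop) : Prop :=
  forall f, I f <-> J f.

Definition if_in_else (k : fieldType) (V E : finType) (P : Prop)
  (J1 J2 : KQ k V E -> Prop) : KQ k V E -> Prop :=
  fun f => (P /\ J1 f) \/ (~ P /\ J2 f).

From mathcomp Require Import all_boot all_order all_algebra.
From Stdlib Require Import FunctionalExtensionality Classical.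
Import GRing.Theory.
Local Open Scope ring_scope.

(* Since x is a source, a non-empty path never ends at x, and since y is a sink,
   a non-empty path never starts at y.  Hence for w supported on paths from x
   to y only the factorizations through trivial paths contribute to products:
   f w = f(eps_y) w and w g = g(eps_x) w.  So the ideal (w) is the line k w, and
   (w) I is k w or 0 according to whether some element of I has a non-zero
   eps_x-coefficient; multiplying such an element by eps_x shows that this
   happens iff eps_x lies in I.  Finally omega and upsilon are non-trivial, so no
   element of (omega + b upsilon) has an eps_x-coefficient. *)

Set Implicit Arguments.
Unset Strict Implicit.

Section Paths.
Variables (V E : finType) (t : E -> V).

Lemma source_ptgt_nil (x v : V) (es : seq E) :
  is_source t x -> ptgt t (v, es) = x -> es = [::].
Proof.
move=> src; case/lastP: es => // es e.
by rewrite /ptgt /= map_rcons last_rcons => /src.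
Qed.

Lemma path_into_source (x : V) (p : qpath V E) :
  is_source t x -> p.1 = x -> ptgt t p = x -> p = eps E x.
Proof. by case: p => v es src /= -> /(source_ptgt_nil src) ->. Qed.

Lemma eps_neq_distinct_paths (x y : V) (p q : qpath V E) :
  is_source t x -> p <> q -> p.1 = x -> ptgt t p = y -> q.1 = x -> ptgt t q = y ->
  eps E x <> p.
Proof.
move=> src neq_pq p1 pt q1 qt eps_p; apply: neq_pq.
have yx : y = x by rewrite -pt -eps_p.
by rewrite -eps_p (path_into_source src q1) // qt yx.
Qed.

End Paths.

Section PathAlgebra.
Variables (k : fieldType) (V E : finType) (s t : E -> V).
Implicit Types (f g : KQ k V E) (I J : KQ k V E -> Prop) (p q : qpath V E).

Definition supported_in (P : qpath V E -> Prop) (f : KQ k V E) : Prop :=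
  forall q, f q != 0 -> P q.

Lemma supported_delta (P : qpath V E -> Prop) p : P p -> supported_in P (delta k p).
Proof. by move=> Pp q; rewrite /delta; case: (q =P p) => [-> // | _]; rewrite eqxx. Qed.

Lemma supportedZ (P : qpath V E -> Prop) c f :
  supported_in P f -> supported_in P (fun q => c * f q).
Proof. by move=> hf q; rewrite mulf_eq0 negb_or => /andP[_ /hf]. Qed.

Lemma supportedD (P : qpath V E -> Prop) f g :
  supported_in P f -> supported_in P g -> supported_in P (fun q => f q + g q).
Proof.
move=> hf hg q; have [fq0|/hf //] := eqVneq (f q) 0.
by rewrite fq0 add0r => /hg.
Qed.

Lemma delta_eq0 p q : q <> p -> delta k p q = 0.
Proof. by rewrite /delta; case: (q =P p). Qed.

Lemma in_kQ_supported1 p f :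
  is_path s t p -> supported_in (eq^~ p) f -> in_kQ s t f.
Proof.
move=> hp hf; split=> [q /hf -> // |].
by exists [:: p] => q /hf ->; rewrite mem_head.
Qed.

Lemma in_kQ_scaled_delta c p : is_path s t p -> in_kQ s t (fun q => c * delta k p q).
Proof.
by move=> hp; apply: (in_kQ_supported1 hp); apply: supportedZ; exact: supported_delta.
Qed.

Lemma in_kQ_delta p : is_path s t p -> in_kQ s t (delta k p).
Proof. by move=> hp; apply: (in_kQ_supported1 hp); apply: supported_delta. Qed.

Lemma ideal_prod0 I J : ideal_prod t I J (fun _ => 0).
Proof.
exists 0%N, (fun _ _ => 0), (fun _ _ => 0); split; first by case.
by apply: functional_extensionality => p; rewrite big_ord0.
Qed.

Lemma ideal_prod1 I J f g : I f -> J g -> ideal_prod t I J (kQmul t f g).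
Proof.
move=> If Jg; exists 1%N, (fun _ => f), (fun _ => g); split=> //.
by apply: functional_extensionality => p; rewrite big_ord1.
Qed.

Lemma same_ideal_if_in_else (P : Prop) I J :
  (P -> same_ideal I J) -> (~ P -> same_ideal I (@zero_ideal k V E)) ->
  same_ideal I (if_in_else P J (@zero_ideal k V E)).
Proof.
move=> hP hnP f; rewrite /if_in_else.
by case: (classic P) => [P_ | nP]; [rewrite hP | rewrite hnP]; tauto.
Qed.

Section SourceSink.
Variables (x y : V).
Hypotheses (src : is_source t x) (snk : is_sink s y).

Lemma kQmul_source f g : supported_in (fun q => q.1 = x) f ->
  kQmul t f g = fun p => f p * g (eps E x).
Proof.
move=> hf; apply: functional_extensionality => -[v es].
rewrite /kQmul big_ord_recl /= take0 drop0 big1 => [|i _].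
  by rewrite addr0; have [->|/hf /= ->] := eqVneq (f (v, es)) 0; rewrite ?mul0r.
apply/eqP; rewrite mulf_eq0; apply/orP; left.
apply: contraT => /hf /= /(source_ptgt_nil src).
by case: es i => [|e es] [i hi] //; rewrite /bump add1n.
Qed.

Lemma kQmul_sink f g :
  supported_in (is_path s t) f -> supported_in (fun q => ptgt t q = y) g ->
  kQmul t f g = fun p => f (eps E y) * g p.
Proof.
move=> hf hg; apply: functional_extensionality => -[v es].
rewrite /kQmul big_ord_recr /= take_size drop_size big1 => [|i _].
  by rewrite add0r; have [->|/hg /= ->] := eqVneq (g (v, es)) 0; rewrite ?mulr0.
have [->|/hg /= gy] := eqVneq (g (v, take i es)) 0; first by rewrite mulr0.
apply/eqP; rewrite mulf_eq0; apply/orP; left; apply: contraT => /hf.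
have : drop i es != [::] by rewrite -size_eq0 size_drop subn_eq0 -ltnNge.
by case: (drop i es) => [|e r] //= _; rewrite gy => /andP[/eqP /snk].
Qed.

Lemma ideal_delta_source I g :
  is_ideal s t I -> I g -> g (eps E x) != 0 -> I (delta k (eps E x)).
Proof.
move=> [_ _ _ _ Imul] Ig gx.
have [Idg _] := Imul _ _ (in_kQ_scaled_delta (g (eps E x))^-1 (p := eps E x) isT) Ig.
rewrite kQmul_source in Idg; last by apply: supportedZ; apply: supported_delta.
suff -> : delta k (eps E x) =
    fun p => (g (eps E x))^-1 * delta k (eps E x) p * g (eps E x) by [].
by apply: functional_extensionality => p; rewrite mulrAC mulVf ?mul1r.
Qed.

Lemma ideal_delta_sink I g :
  is_ideal s t I -> I g -> g (eps E y) != 0 -> I (delta k (eps E y)).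
Proof.
move=> [Iin _ _ _ Imul] Ig gy.
have [_ Igd] := Imul _ _ (in_kQ_scaled_delta (g (eps E y))^-1 (p := eps E y) isT) Ig.
rewrite kQmul_sink in Igd;
  [|exact: (Iin _ Ig).1 | by apply: supportedZ; apply: supported_delta].
suff -> : delta k (eps E y) =
    fun p => g (eps E y) * ((g (eps E y))^-1 * delta k (eps E y) p) by [].
by apply: functional_extensionality => p; rewrite mulVKf.
Qed.

Section PathsFromSourceToSink.
Variable w : KQ k V E.
Hypotheses (w_from : supported_in (fun q => q.1 = x) w)
           (w_to : supported_in (fun q => ptgt t q = y) w).

Lemma gen_idealP f : gen_ideal s t w f <-> exists c, f = fun p => c * w p.
Proof.
split=> [[m [F [G [FG ->]]]] | [c ->]].
  exists (\sum_(i < m) F i (eps E y) * G i (eps E x)).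
  apply: functional_extensionality => p; rewrite mulr_suml; apply: eq_bigr => i _.
  rewrite (kQmul_sink (FG i).1.1) // kQmul_source; last exact: supportedZ.
  by rewrite mulrAC.
exists 1%N, (fun _ q => c * delta k (eps E y) q), (fun _ => delta k (eps E x)).
split=> [_|]; first by split;
  [exact: in_kQ_scaled_delta | exact: (in_kQ_delta (p := eps E x))].
apply: functional_extensionality => p.
rewrite big_ord1 (kQmul_sink (g := w)) //;
  last by apply: supportedZ; apply: supported_delta.
rewrite kQmul_source; last exact: supportedZ.
by rewrite /delta !eqxx !mulr1.
Qed.

Lemma ideal_prod_gen_l_line J f : ideal_prod t (gen_ideal s t w) J f ->
  exists c, f = (fun p => c * w p) /\ (c != 0 -> exists2 g, J g & g (eps E x) != 0).
Proof.
case=> m [F [G [FG ->]]].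
have /fin_all_exists [c Fc] i : exists c, F i = fun p => c * w p.
  exact/gen_idealP/(FG i).1.
exists (\sum_(i < m) c i * G i (eps E x)); split.
  apply: functional_extensionality => p; rewrite mulr_suml; apply: eq_bigr => i _.
  by rewrite Fc kQmul_source; [rewrite mulrAC | exact: supportedZ].
move=> /eqP nz; case: (pickP (fun i => c i * G i (eps E x) != 0)) => [i | all0].
  by rewrite mulf_eq0 negb_or => /andP[_ ?]; exists (G i) => //; exact: (FG i).2.
by case: nz; apply: big1 => i _; apply/eqP/negbFE/all0.
Qed.

Lemma ideal_prod_gen_r_line J f : (forall g, J g -> in_kQ s t g) ->
  ideal_prod t J (gen_ideal s t w) f ->
  exists c, f = (fun p => c * w p) /\ (c != 0 -> exists2 g, J g & g (eps E y) != 0).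
Proof.
move=> Jin [m [G [F [GF ->]]]].
have /fin_all_exists [c Fc] i : exists c, F i = fun p => c * w p.
  exact/gen_idealP/(GF i).2.
exists (\sum_(i < m) G i (eps E y) * c i); split.
  apply: functional_extensionality => p; rewrite mulr_suml; apply: eq_bigr => i _.
  rewrite Fc kQmul_sink;
    [by rewrite mulrA | exact: (Jin _ (GF i).1).1 | exact: supportedZ].
move=> /eqP nz; case: (pickP (fun i => G i (eps E y) * c i != 0)) => [i | all0].
  by rewrite mulf_eq0 negb_or => /andP[? _]; exists (G i) => //; exact: (GF i).1.
by case: nz; apply: big1 => i _; apply/eqP/negbFE/all0.
Qed.

Lemma ideal_prod_gen_l_eps J : J (delta k (eps E x)) ->
  same_ideal (ideal_prod t (gen_ideal s t w) J) (gen_ideal s t w).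
Proof.
move=> Jx f; split=> [/ideal_prod_gen_l_line [c [-> _]] | /gen_idealP [c ->]].
  by apply/gen_idealP; exists c.
have wx : kQmul t (fun p => c * w p) (delta k (eps E x)) = fun p => c * w p.
  rewrite kQmul_source; last exact: supportedZ.
  by apply: functional_extensionality => p; rewrite /delta eqxx mulr1.
by rewrite -wx; apply: ideal_prod1 => //; apply/gen_idealP; exists c.
Qed.

Lemma ideal_prod_gen_r_eps J :
  (forall g, J g -> in_kQ s t g) -> J (delta k (eps E y)) ->
  same_ideal (ideal_prod t J (gen_ideal s t w)) (gen_ideal s t w).
Proof.
move=> Jin Jy f.
split=> [/(ideal_prod_gen_r_line Jin) [c [-> _]] | /gen_idealP [c ->]].
  by apply/gen_idealP; exists c.
have yw : kQmul t (delta k (eps E y)) (fun p => c * w p) = fun p => c * w p.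
  rewrite kQmul_sink; [|exact: (Jin _ Jy).1 | exact: supportedZ].
  by apply: functional_extensionality => p; rewrite /delta eqxx mul1r.
by rewrite -yw; apply: ideal_prod1 => //; apply/gen_idealP; exists c.
Qed.

Lemma ideal_prod_gen_l_eq0 J : (forall g, J g -> g (eps E x) = 0) ->
  same_ideal (ideal_prod t (gen_ideal s t w) J) (@zero_ideal k V E).
Proof.
move=> J0 f; rewrite /zero_ideal; split=> [/ideal_prod_gen_l_line [c [-> Jc]] | ->].
  have -> : c = 0 by apply/eqP; apply: contraT => /Jc [g /J0 ->]; rewrite eqxx.
  by apply: functional_extensionality => p; rewrite mul0r.
exact: ideal_prod0.
Qed.

Lemma ideal_prod_gen_r_eq0 J :
  (forall g, J g -> in_kQ s t g) -> (forall g, J g -> g (eps E y) = 0) ->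
  same_ideal (ideal_prod t J (gen_ideal s t w)) (@zero_ideal k V E).
Proof.
move=> Jin J0 f; rewrite /zero_ideal.
split=> [/(ideal_prod_gen_r_line Jin) [c [-> Jc]] | ->].
  have -> : c = 0 by apply/eqP; apply: contraT => /Jc [g /J0 ->]; rewrite eqxx.
  by apply: functional_extensionality => p; rewrite mul0r.
exact: ideal_prod0.
Qed.

Lemma ideal_prod_gen_ideal_l I : is_ideal s t I ->
  same_ideal (ideal_prod t (gen_ideal s t w) I)
    (if_in_else (I (delta k (eps E x))) (gen_ideal s t w) (@zero_ideal k V E)).
Proof.
move=> HI; apply: same_ideal_if_in_else; first exact: ideal_prod_gen_l_eps.
move=> nIx; apply: ideal_prod_gen_l_eq0 => g Ig; apply/eqP; apply: contra_notT nIx.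
exact: ideal_delta_source HI Ig.
Qed.

Lemma ideal_prod_gen_ideal_r I : is_ideal s t I ->
  same_ideal (ideal_prod t I (gen_ideal s t w))
    (if_in_else (I (delta k (eps E y))) (gen_ideal s t w) (@zero_ideal k V E)).
Proof.
move=> HI; have [Iin _ _ _ _] := HI.
apply: same_ideal_if_in_else; first exact: ideal_prod_gen_r_eps.
move=> nIy; apply: ideal_prod_gen_r_eq0 => // g Ig; apply/eqP; apply: contra_notT nIy.
exact: ideal_delta_sink HI Ig.
Qed.

End PathsFromSourceToSink.

End SourceSink.
End PathAlgebra.

Theorem lemma23 (k : closedFieldType) (n : nat) (V E : finType) (s t : E -> V)
  (x y : V) (omega upsilon : qpath V E) (a : k) :
  admissible_An n s t ->
  is_source t x -> (forall z, is_source t z -> z = x) ->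
  is_sink s y -> (forall z, is_sink s z -> z = y) ->
  maximal_path s t omega -> maximal_path s t upsilon -> omega <> upsilon ->
  (forall p, maximal_path s t p -> p = omega \/ p = upsilon) ->
  omega.1 = x -> ptgt t omega = y -> upsilon.1 = x -> ptgt t upsilon = y ->
  a != 0 ->
  let u := fun p => delta k omega p + a * delta k upsilon p in
  (forall I : KQ k V E -> Prop, indecomposable_ideal s t I ->
     same_ideal (ideal_prod t (gen_ideal s t u) I)
       (if_in_else (I (delta k (eps E x))) (gen_ideal s t u) (@zero_ideal k V E))
     /\
     same_ideal (ideal_prod t I (gen_ideal s t u))
       (if_in_else (I (delta k (eps E y))) (gen_ideal s t u) (@zero_ideal k V E)))
  /\
  (forall b : k, b != 0 ->
     same_ideal (ideal_prod t (gen_ideal s t u)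
                   (gen_ideal s t (fun p => delta k omega p + b * delta k upsilon p)))
       (@zero_ideal k V E)).
Proof.
move=> _ src _ snk _ _ _ neq_ou _ o1 ot u1 ut _ u.
have from_x c : supported_in (fun q => q.1 = x)
    (fun p => delta k omega p + c * delta k upsilon p).
  by apply: supportedD;
    [apply: supported_delta | apply: supportedZ; apply: supported_delta].
have to_y c : supported_in (fun q => ptgt t q = y)
    (fun p => delta k omega p + c * delta k upsilon p).
  by apply: supportedD;
    [apply: supported_delta | apply: supportedZ; apply: supported_delta].
split=> [I [HI _] | b _].
  split; [exact: (ideal_prod_gen_ideal_l src snk (from_x a) (to_y a))
         | exact: (ideal_prod_gen_ideal_r src snk (from_x a) (to_y a))].
apply: (ideal_prod_gen_l_eq0 src snk (from_x a) (to_y a)).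
move=> g /(gen_idealP src snk (from_x b) (to_y b)) [c ->].
have omega_eps := eps_neq_distinct_paths src neq_ou o1 ot u1 ut.
have upsilon_eps := eps_neq_distinct_paths src (nesym neq_ou) u1 ut o1 ot.
by rewrite !delta_eq0 // mulr0 addr0 mulr0.
Qed.
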